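(* Let $m_1,m_2\ge 0$ and $s_1,s_2>0$. The falsification frontier is $$FF=\big(FF_{1,2}\cup FF_{2,1}\big)\cap[0,\infty)^2,$$ where for $(j,j')\in\{(1,2),(2,1)\}$ $$FF_{j,j'}=\Big\{(\delta_e,\delta_m)\in\mathbb{R}^2:\ \delta_m=\frac{m_j-m_{j'}-\delta_e\,(s_j+s_{j'})}{2}\Big\}.$$
   Context: Let $m_j=\mathbb{E}[\hat\theta^{j}/\alpha^{j}]$ and $s_j=\mathbb{E}[1/\alpha^{j}]$ for two variable inputs $j=1,2$, where $\alpha^j>0$ is the revenue share of input $j$ and $\hat\theta^j\ge0$ its estimated output elasticity; for the purposes of the statement these are arbitrary real numbers with $m_j\ge 0$, $s_j>0$. For $(\delta_e,\delta_m)\in[0,\infty)^2$ (uniform relaxation bounds on elasticity error and on departure from cost minimization) define $\mathrm{LB}_j(\delta_e,\delta_m)=m_j-\delta_e s_j-\delta_m$, $\mathrm{UB}_j(\delta_e,\delta_m)=m_j+\delta_e s_j+\delta_m$, $L=\max\{0,\mathrm{LB}_1,\mathrm{LB}_2\}$, $U=\min\{\mathrm{UB}_1,\mathrm{UB}_2\}$, and the identified set $I(\delta_e,\delta_m)=\{x\in\mathbb{R}: L\le x\le U\}$ (possibly empty). The falsification frontier $FF$ is the set of $(\delta_e,\delta_m)\in[0,\infty)^2$ such that $I(\delta_e,\delta_m)\neq\emptyset$ and $I(\delta_e',\delta_m')=\emptyset$ for every $(\delta_e',\delta_m')\in[0,\infty)^2$ with $\delta_e'\le\delta_e$, $\delta_m'\le\delta_m$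 and $(\delta_e',\delta_m')\neq(\delta_e,\delta_m)$. *)

From Stdlib Require Import Reals.
Open Scope R_scope.

(* Input j has data m_j = E[theta^j/alpha^j] and s_j = E[1/alpha^j]. *)
Definition LB (mj sj de dm : R) : R := mj - de * sj - dm.
Definition UB (mj sj de dm : R) : R := mj + de * sj + dm.

Definition Lend (m1 m2 s1 s2 de dm : R) : R :=
  Rmax 0 (Rmax (LB m1 s1 de dm) (LB m2 s2 de dm)).
Definition Uend (m1 m2 s1 s2 de dm : R) : R :=
  Rmin (UB m1 s1 de dm) (UB m2 s2 de dm).

Definition Iset (m1 m2 s1 s2 de dm : R) : R -> Prop :=
  fun x => Lend m1 m2 s1 s2 de dm <= x /\ x <= Uend m1 m2 s1 s2 de dm.

Definition nonempty (A : R -> Prop) : Prop := exists x, A x.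

Definition FF (m1 m2 s1 s2 : R) : R * R -> Prop :=
  fun p =>
    0 <= fst p /\ 0 <= snd p /\
    nonempty (Iset m1 m2 s1 s2 (fst p) (snd p)) /\
    forall de' dm' : R, 0 <= de' -> 0 <= dm' ->
      de' <= fst p -> dm' <= snd p -> (de', dm') <> p ->
      ~ nonempty (Iset m1 m2 s1 s2 de' dm').

Definition FFline (mj mj' sj sj' : R) : R * R -> Prop :=
  fun p => snd p = (mj - mj' - fst p * (sj + sj')) / 2.

Definition nonneg_quadrant : R * R -> Prop :=
  fun p => 0 <= fst p /\ 0 <= snd p.

(* The identified set is nonempty exactly when the gap |m1 - m2| between the
   two point identifications can be bridged by the relaxations, i.e. when
   |m1 - m2| <= (s1 + s2) de + 2 dm.  This is an upper half-plane cut out by a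
   linear form with positive coefficients, whose Pareto-minimal points in the
   quadrant are exactly those on its boundary line; splitting |m1 - m2| by sign
   gives the two lines FF_{1,2} and FF_{2,1}. *)
From Stdlib Require Import Reals Lra Psatz.
Open Scope R_scope.

Definition pareto_minimal (P : R -> R -> Prop) (x y : R) : Prop :=
  P x y /\
  forall x' y', 0 <= x' -> 0 <= y' -> x' <= x -> y' <= y -> (x', y') <> (x, y) ->
    ~ P x' y'.

Lemma pareto_minimal_ext (P Q : R -> R -> Prop) (x y : R) :
  (forall x y, 0 <= x -> 0 <= y -> P x y <-> Q x y) ->
  0 <= x -> 0 <= y ->
  pareto_minimal P x y <-> pareto_minimal Q x y.
Proof.
  intros HPQ Hx Hy; unfold pareto_minimal.
  split; intros [Hxy Hmin]; split.
  - now apply HPQ.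
  - intros x' y' Hx' Hy' Hle Hle' Hne HQ.
    now apply (Hmin x' y'); [..| apply HPQ].
  - now apply HPQ.
  - intros x' y' Hx' Hy' Hle Hle' Hne HP.
    now apply (Hmin x' y'); [..| apply HPQ].
Qed.

Lemma pareto_minimal_halfplane (a b c x y : R) :
  0 < a -> 0 < b -> 0 <= c -> 0 <= x -> 0 <= y ->
  pareto_minimal (fun x y => c <= a * x + b * y) x y <-> a * x + b * y = c.
Proof.
  intros Ha Hb Hc Hx Hy; unfold pareto_minimal; split.
  - intros [Hge Hmin].
    destruct (Req_dec (a * x + b * y) c) as [Heq | Hneq]; [exact Heq |].
    exfalso.
    set (g := a * x + b * y) in *.
    assert (Hg : 0 < g) by lra.
    (* Shrinking (x, y) towards the origin by the factor c / g < 1 stays in the half-plane. *)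
    set (l := c / g).
    assert (Hl0 : 0 <= l) by (apply Rmult_le_pos; [lra | apply Rlt_le, Rinv_0_lt_compat; lra]).
    assert (Hlg : l * g = c) by (unfold l; field; lra).
    assert (Hl1 : l < 1) by nra.
    assert (Hlin : a * (l * x) + b * (l * y) = l * g) by (unfold g; ring).
    apply (Hmin (l * x) (l * y)); try nra.
    intros Heq; injection Heq as Ex Ey.
    rewrite Ex, Ey in Hlin; fold g in Hlin.
    lra.
  - intros Heq; split; [lra |].
    intros x' y' Hx' Hy' Hle Hle' Hne Hge.
    assert (Hlt : x' < x \/ y' < y).
    { destruct (Req_dec x' x), (Req_dec y' y); subst; try lra.
      now contradiction Hne. }
    destruct Hlt; nra.
Qed.

Lemma Iset_nonempty_iff (m1 m2 s1 s2 de dm : R) :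
  0 <= m1 -> 0 <= m2 -> 0 < s1 -> 0 < s2 -> 0 <= de -> 0 <= dm ->
  nonempty (Iset m1 m2 s1 s2 de dm) <->
  Rabs (m1 - m2) <= (s1 + s2) * de + 2 * dm.
Proof.
  intros Hm1 Hm2 Hs1 Hs2 Hde Hdm.
  assert (0 <= de * s1) by nra.
  assert (0 <= de * s2) by nra.
  unfold nonempty, Iset, Lend, Uend, LB, UB.
  split.
  - intros [z [Hl Hu]].
    pose proof (Rmax_r 0 (Rmax (m1 - de * s1 - dm) (m2 - de * s2 - dm))).
    pose proof (Rmax_l (m1 - de * s1 - dm) (m2 - de * s2 - dm)).
    pose proof (Rmax_r (m1 - de * s1 - dm) (m2 - de * s2 - dm)).
    pose proof (Rmin_l (m1 + de * s1 + dm) (m2 + de * s2 + dm)).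
    pose proof (Rmin_r (m1 + de * s1 + dm) (m2 + de * s2 + dm)).
    apply Rabs_le; lra.
  - intros Hgap.
    pose proof (Rle_abs (m1 - m2)).
    assert (m2 - m1 <= Rabs (m1 - m2)) by (rewrite Rabs_minus_sym; apply Rle_abs).
    eexists; split; [apply Rle_refl |].
    unfold Rmax, Rmin; repeat destruct Rle_dec; lra.
Qed.

Lemma FF_iff_gap_line (m1 m2 s1 s2 de dm : R) :
  0 <= m1 -> 0 <= m2 -> 0 < s1 -> 0 < s2 ->
  FF m1 m2 s1 s2 (de, dm) <->
  (0 <= de /\ 0 <= dm /\ (s1 + s2) * de + 2 * dm = Rabs (m1 - m2)).
Proof.
  intros Hm1 Hm2 Hs1 Hs2.
  change (FF m1 m2 s1 s2 (de, dm)) with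
    (0 <= de /\ 0 <= dm /\
     pareto_minimal (fun de dm => nonempty (Iset m1 m2 s1 s2 de dm)) de dm).
  assert (Hiff : forall de dm, 0 <= de -> 0 <= dm ->
    pareto_minimal (fun de dm => nonempty (Iset m1 m2 s1 s2 de dm)) de dm <->
    (s1 + s2) * de + 2 * dm = Rabs (m1 - m2)).
  { intros de' dm' Hde Hdm.
    rewrite (pareto_minimal_ext _
      (fun de dm => Rabs (m1 - m2) <= (s1 + s2) * de + 2 * dm)) by
      (intros; now apply Iset_nonempty_iff || assumption).
    apply pareto_minimal_halfplane; auto using Rabs_pos; lra. }
  split; intros (Hde & Hdm & H); repeat split; trivial; now apply Hiff.
Qed.

Theorem proposition2 (m1 m2 s1 s2 : R) :
  0 <= m1 -> 0 <= m2 -> 0 < s1 -> 0 < s2 ->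
  forall p : R * R,
    FF m1 m2 s1 s2 p <->
    ((FFline m1 m2 s1 s2 p \/ FFline m2 m1 s2 s1 p) /\ nonneg_quadrant p).
Proof.
  intros Hm1 Hm2 Hs1 Hs2 [de dm].
  rewrite FF_iff_gap_line by assumption.
  unfold FFline, nonneg_quadrant; simpl.
  unfold Rabs; destruct Rcase_abs; split.
  - intros (Hde & Hdm & E); split; [right | split]; lra.
  - intros [[E | E] [Hde Hdm]]; repeat split; nra.
  - intros (Hde & Hdm & E); split; [left | split]; lra.
  - intros [[E | E] [Hde Hdm]]; repeat split; nra.
Qed.
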